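(* Let $\Gamma$ be a connected $\mathbb Z$-leg-weighted graph. Then all but finitely many weightings $w\in W(\Gamma)$ admit a positive cycle, i.e. a cycle $\gamma$ in $\Gamma$ such that $w(e)>0$ for every directed edge $e\in\gamma$ (where $w(e)$ is the value of $w$ on the half-edge of $e$ at its source).
   Context: A graph consists of finite sets $V$ (vertices) and $H$ (half-edges), a map $\mathrm{end}\colon H\to V$, an involution $i$ of $H$, a genus $g\colon V\to\mathbb Z_{\ge0}$ and an integer twist $k$. Legs are fixed points of $i$; a directed edge is a non-leg half-edge $h$, with source $\mathrm{end}(h)$ and target $\mathrm{end}(i(h))$. $\mathrm{val}(v)$ is the number of non-leg half-edges at $v$, $\kappa(v)=2g(v)-2+\mathrm{val}(v)$, $g(\Gamma)=b_1(\Gamma)+\sum_vg(v)$. A cycle is a closed walk of directed edges (target of each equals source of the next, returning to the start) repeating no vertex or undirected edge. A weighting is $w\colon H\to\mathbb Z$ with $w(h)+w(i(h))=0$ for $h\neq i(h)$ and $\sum_{\mathrm{end}(h)=v}w(h)+k\kappa(v)=0$ for all vertices $v$. A leg-weighted graph has given integer leg values summing to $-k(2g(\Gamma)-2)$, and $W(\Gamma)$ is the set of weightings with these leg values. *)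

From mathcomp Require Import all_boot all_order all_algebra.
Set Implicit Arguments. Unset Strict Implicit. Unset Printing Implicit Defensive.
Import Order.TTheory GRing.Theory Num.Theory.
Local Open Scope ring_scope.

(* A graph: vertices V, half-edges H (finite types), end map [en],
   involution [i] (hypothesis [involutive i] in the theorem),
   genus [g], twist [k : int] (passed separately). *)
Section Graph.
Variables (V H : finType) (en : H -> V) (i : H -> H) (g : V -> nat).

Definition is_leg (h : H) : bool := i h == h.

Definition valence (v : V) : nat := #|[pred h | (en h == v) && ~~ is_leg h]|.

Definition kappa (v : V) : int := 2%:Z * (g v)%:Z - 2%:Z + (valence v)%:Z.

Definition adj : rel V :=
  fun u v => [exists h : H, [&& ~~ is_leg h, en h == u & en (i h) == v]].

Definition connected_graph : Prop := forall u v : V, connect adj u v.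

Definition n_edges : nat := #|[pred h | ~~ is_leg h]| %/ 2.

Definition betti1 : int :=
  n_edges%:Z - #|V|%:Z + (n_comp adj predT)%:Z.

Definition graph_genus : int := betti1 + (\sum_(v : V) g v)%:Z.

Definition is_weighting (k : int) (w : {ffun H -> int}) : Prop :=
  (forall h, ~~ is_leg h -> w h + w (i h) = 0) /\
  (forall v, \sum_(h : H | en h == v) w h + k * kappa v = 0).

Definition leg_weighted (k : int) (ell : H -> int) : Prop :=
  \sum_(h : H | is_leg h) ell h = - (k * (2%:Z * graph_genus - 2%:Z)).

Definition in_W (k : int) (ell : H -> int) (w : {ffun H -> int}) : Prop :=
  is_weighting k w /\ (forall h, is_leg h -> w h = ell h).

(* A cycle: nonempty list of directed edges (non-leg half-edges)
   h_0,...,h_{n-1}, with target(h_j) = source(h_{j+1 mod n}),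
   no repeated vertex (sources pairwise distinct) and no repeated
   undirected edge ({h_j, i h_j} pairwise distinct). *)
Definition is_cycle (c : seq H) : Prop :=
  if c is h0 :: _ then
  [/\ (0 < size c)%N,
      all (fun h => ~~ is_leg h) c,
      forall j : nat, (j < size c)%N ->
        en (i (nth h0 c j)) = en (nth h0 c (j.+1 %% size c)),
      uniq (map en c) &
      forall j l : nat, (j < size c)%N -> (l < size c)%N -> j <> l ->
        nth h0 c l <> nth h0 c j /\
        nth h0 c l <> i (nth h0 c j)]
  else False.

Definition positive_cycle (w : {ffun H -> int}) (c : seq H) : Prop :=
  is_cycle c /\ (forall h, h \in c -> 0 < w h).

Definition has_positive_cycle (w : {ffun H -> int}) : Prop :=
  exists c : seq H, positive_cycle w c.

End Graph.

From mathcomp Require Import all_boot all_order all_algebra.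
From mathcomp Require Import zify.
Set Implicit Arguments. Unset Strict Implicit. Unset Printing Implicit Defensive.
Import Order.TTheory GRing.Theory Num.Theory.
Local Open Scope ring_scope.

(* Suppose [w] has no positive cycle and [h] is a positive edge. Let [S] be
   the set of vertices reachable from the target of [h] along positive edges.
   The source of [h] lies outside [S], so the reverse edge [i h] leaves [S],
   and every other edge leaving [S] has non-positive weight. The vertex
   conditions and the fixed leg values determine the total weight leaving
   [S] (edges inside [S] cancel in pairs), so [w (i h)] is bounded below by a
   constant depending only on [S]. Hence all edge weights are bounded, and
   since the legs are fixed only finitely many such [w] remain. *)

Lemma cycle_nth (T : Type) (e : rel T) (x0 : T) (c : seq T) :
  cycle e c -> forall j, (j < size c)%N -> e (nth x0 c j) (nth x0 c (j.+1 %% size c)).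
Proof.
case: c => [//|x p] /(pathP x0) ep j jp.
have := ep j; rewrite size_rcons => /(_ jp).
rewrite -rcons_cons nth_rcons /= jp nth_rcons.
move: jp; rewrite ltnS leq_eqVlt => /orP[/eqP->|jp'].
  by rewrite ltnn eqxx modnn.
by rewrite jp' modn_small.
Qed.

Lemma bounded_ffun_finite (I : finType) (B : I -> nat) :
  exists s : seq {ffun I -> int},
    forall f : {ffun I -> int}, (forall x, (`|f x| <= B x)%N) -> f \in s.
Proof.
pose N := (\max_x B x)%N.
exists [seq [ffun x => (u x)%:Z - N%:Z] | u : {ffun I -> 'I_(N.*2).+1}].
move=> f fB; apply/imageP; exists [ffun x => inord `|f x + N%:Z|] => //.
apply/ffunP => x; have := leq_trans (fB x) (leq_bigmax x); rewrite -/N !ffunE.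
by clearbody N => fxN; rewrite inordK /=; lia.
Qed.

Lemma is_leg_inv (H : finType) (i : H -> H) (h : H) :
  involutive i -> is_leg i (i h) = is_leg i h.
Proof. by move=> iK; rewrite /is_leg iK eq_sym. Qed.

Lemma sum_antisym_eq0 (H : finType) (i : H -> H) (w : H -> int) (P : pred H) :
  involutive i -> (forall h, ~~ is_leg i h -> w h + w (i h) = 0) ->
  (forall h, P (i h) = P h) ->
  \sum_(h | P h && ~~ is_leg i h) w h = 0.
Proof.
move=> iK w_antisym Pi.
set total := \sum_(h | P h && ~~ is_leg i h) w h.
suff: total = - total by lia.
rewrite /total -sumrN (reindex_inj (inv_inj iK)) /=.
apply: eq_big => [h|h /andP[_ /w_antisym]]; first by rewrite Pi is_leg_inv.
by rewrite iK => /eqP; rewrite addr_eq0 => /eqP.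
Qed.

Lemma is_cycle_intro (V H : finType) (en : H -> V) (i : H -> H) (c : seq H) :
  c != [::] -> all (fun h => ~~ is_leg i h) c ->
  cycle (fun h h' => en (i h) == en h') c -> uniq (map en c) ->
  {in c, forall h, i h \notin c} -> is_cycle en i c.
Proof.
case: c => [//|h0 c'] _; set c := h0 :: c' => legs cyc uniq_en opp_c.
have uniq_c : uniq c := map_uniq uniq_en.
split=> // [j jc|j l jc lc jl]; first exact/eqP/(cycle_nth h0 cyc).
split=> [|clj]; first by move/eqP; rewrite nth_uniq // => /eqP/esym.
by have := opp_c _ (mem_nth h0 jc); rewrite -clj mem_nth.
Qed.

Section PositiveCycles.
Variables (V H : finType) (en : H -> V) (i : H -> H) (w : {ffun H -> int}).
Hypothesis w_antisym : forall h, ~~ is_leg i h -> w h + w (i h) = 0.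

Definition positive_edge (h : H) : bool := ~~ is_leg i h && (0 < w h).

Definition positive_adj : rel V :=
  fun u v => [exists h, [&& positive_edge h, en h == u & en (i h) == v]].

Lemma positive_edge_opp h : positive_edge h -> ~~ positive_edge (i h).
Proof. by case/andP=> /w_antisym wh wpos; apply/andP=> -[_]; lia. Qed.

Lemma ucycle_positive_cycle (q : seq V) :
  q != [::] -> ucycle positive_adj q -> has_positive_cycle en i w.
Proof.
case: q => [//|x q'] _; set q := x :: q' => /andP[cq uq].
have /existsP[h0 _] := next_cycle cq (mem_head x q').
pose edge u :=
  odflt h0 [pick h | positive_edge h && (en h == u) && (en (i h) == next q u)].
have edgeP u : u \in q ->
    [/\ positive_edge (edge u), en (edge u) = u & en (i (edge u)) = next q u].
  move=> uq'; rewrite /edge.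
  case: pickP => [h /andP[/andP[ph /eqP ->] /eqP ->] //|none].
  have /existsP[h hP] := next_cycle cq uq'.
  by move: (none h); rewrite /= -andbA hP.
pose c := map edge q.
have en_c : map en c = q.
  by rewrite -map_comp -[RHS]map_id; apply/eq_in_map => u /edgeP[].
have pos_c h : h \in c -> positive_edge h by case/mapP=> u /edgeP[? _ _] ->.
have cycle_c : cycle (fun h h' => en (i h) == en h') c.
  rewrite cycle_map; apply: (cycle_from_next uq) => u uq' /=.
  have [_ _ ->] := edgeP u uq'.
  by have [_ -> _] := edgeP (next q u) (etrans (mem_next q u) uq').
exists c; split; last by move=> h /pos_c /andP[].
apply: is_cycle_intro => //; first by apply/allP=> h /pos_c /andP[].
- by rewrite en_c.
- by move=> h /pos_c /positive_edge_opp; apply: contra => /pos_c.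
Qed.

Lemma positive_closed_walk h :
  positive_edge h -> connect positive_adj (en (i h)) (en h) ->
  has_positive_cycle en i w.
Proof.
move=> ph /connectP[p p_path]; case/shortenP: p_path => p' p'_path uniq_p' _ last_p'.
apply: (@ucycle_positive_cycle (en (i h) :: p')) => //.
rewrite /ucycle uniq_p' andbT /= rcons_path p'_path -last_p'.
by apply/existsP; exists h; rewrite ph !eqxx.
Qed.

End PositiveCycles.

Section Outflow.
Variables (V H : finType) (en : H -> V) (i : H -> H) (g : V -> nat).
Variables (k : int) (ell : H -> int).
Hypothesis iK : involutive i.

Definition out_edge (S : {set V}) (h : H) : bool :=
  [&& en h \in S, ~~ is_leg i h & en (i h) \notin S].

Definition boundary_value (S : {set V}) : int :=
  - \sum_(v in S) k * kappa en i g v - \sum_(h | is_leg i h && (en h \in S)) ell h.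

Lemma outflow_weighting w S :
  in_W en i g k ell w -> \sum_(h | out_edge S h) w h = boundary_value S.
Proof.
move=> [[w_antisym w_vertex] w_legs].
have vertex_sum : \sum_(h | en h \in S) w h = - \sum_(v in S) k * kappa en i g v.
  rewrite (partition_big en (mem S)) //= -sumrN; apply: eq_bigr => v vS.
  rewrite (eq_bigl (fun h => en h == v)) => [|h].
    by apply/eqP; rewrite -addr_eq0 w_vertex.
  by rewrite andb_idl // => /eqP ->.
have legs_sum : \sum_(h | (en h \in S) && is_leg i h) w h =
                \sum_(h | is_leg i h && (en h \in S)) ell h.
  by apply: eq_big => [h|h /andP[_ /w_legs]]; first exact: andbC.
have inner_sum :
    \sum_(h | (en h \in S) && ~~ is_leg i h && (en (i h) \in S)) w h = 0.
  rewrite -[RHS](@sum_antisym_eq0 _ i w (fun h => (en h \in S) && (en (i h) \in S))) //.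
    by apply: eq_bigl => h; rewrite -!andbA [~~ _ && _]andbC.
  by move=> h; rewrite iK andbC.
move: vertex_sum; rewrite (bigID (is_leg i)) /= legs_sum.
rewrite [X in _ + X](bigID (fun h => en (i h) \in S)) /= inner_sum add0r.
rewrite /boundary_value (eq_bigl _ _ (fun h => andbA _ _ _)).
by move=> <-; rewrite addrAC subrr add0r.
Qed.

Definition boundary_bound : nat := \max_(S : {set V}) `|boundary_value S|%N.

Lemma positive_edge_reverse_ge w h :
  in_W en i g k ell w -> ~ has_positive_cycle en i w -> positive_edge i w h ->
  - (boundary_bound%:Z) <= w (i h).
Proof.
move=> wW no_cycle ph; have w_antisym := wW.1.1.
pose S := [set v | connect (positive_adj en i w) (en (i h)) v].
have hS : en h \notin S.
  by rewrite inE; apply/negP => /(positive_closed_walk w_antisym ph).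
have out_ih : out_edge S (i h).
  by rewrite /out_edge is_leg_inv // iK hS inE connect0 andbT; case/andP: ph.
have out_nonpos h' : out_edge S h' && (h' != i h) -> w h' <= 0.
  case/andP=> /and3P[h'S h'_leg h'S'] _; rewrite leNgt; apply/negP => wh'.
  move: h'S'; rewrite !inE => /negP; apply; apply: connect_trans (connect1 _).
    by rewrite inE in h'S; exact: h'S.
  by apply/existsP; exists h'; rewrite /positive_edge h'_leg wh' !eqxx.
have := outflow_weighting S wW; rewrite (bigD1 (i h)) //= => flux.
have flux_le : boundary_value S <= w (i h) by rewrite -flux gerDl; apply: sumr_le0.
have S_bounded : (`|boundary_value S| <= boundary_bound)%N := leq_bigmax S.
clearbody S; lia.
Qed.

Lemma weight_bounded w h :
  in_W en i g k ell w -> ~ has_positive_cycle en i w -> ~~ is_leg i h ->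
  (`|w h| <= boundary_bound)%N.
Proof.
move=> wW no_cycle h_leg; have := wW.1.1 h h_leg.
case: (ltrgtP (w h) 0) => [wneg|wpos|->//] antisym.
  have pih : positive_edge i w (i h) by rewrite /positive_edge is_leg_inv // h_leg; lia.
  by have := positive_edge_reverse_ge wW no_cycle pih; rewrite iK; lia.
have ph : positive_edge i w h by rewrite /positive_edge h_leg wpos.
by have := positive_edge_reverse_ge wW no_cycle ph; lia.
Qed.

End Outflow.

Theorem lemma3p9 (V H : finType) (en : H -> V) (i : H -> H) (g : V -> nat)
    (k : int) (ell : H -> int) :
  involutive i ->
  connected_graph en i ->
  leg_weighted en i g k ell ->
  exists s : seq {ffun H -> int},
    forall w : {ffun H -> int},
      in_W en i g k ell w -> ~ has_positive_cycle en i w -> w \in s.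
Proof.
move=> iK _ _.
have [s s_box] := bounded_ffun_finite
  (fun h => if is_leg i h then `|ell h|%N else boundary_bound en i g k ell).
exists s => w wW no_cycle; apply: s_box => h.
case: ifPn => [h_leg|h_leg]; first by rewrite wW.2.
exact: weight_bounded.
Qed.
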